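(* Let $\mathscr X\subset\mathbb R^d$ be compact, $\|\cdot\|$ a norm, and $\mathscr X_N\subset\mathscr X$ a finite set of $N$ candidate points. Let $\mathbf x_1\in\mathscr X_N$ and, for $n\ge1$, let $\mathbf x_{n+1}$ be any point of $\mathrm{Arg}\max_{\mathbf x\in\mathscr X_N}\min_{1\le i\le n}\|\mathbf x-\mathbf x_i\|$, with $\mathbf X_n=\{\mathbf x_1,\ldots,\mathbf x_n\}$. Set $\alpha_n=1-\mathsf{CR}_{\mathscr X}(\mathscr X_N)/\mathsf{CR}_{\mathscr X}(\mathbf X_n)$. Then, for $n<N$ (with the bounds below read as trivial when $\alpha_n=0$), $$\mathsf{CR}_{\mathscr X}(\mathbf X_n)\le(2/\alpha_n)\,\mathsf{CR}_n^*\ \ (n\ge1),\qquad\mathsf{SR}(\mathbf X_n)\ge(\alpha_n/2)\,\mathsf{SR}_n^*\ \ (n\ge2),\qquad\mathsf{MR}_{\mathscr X}(\mathbf X_n)\le 2/\alpha_n\ \ (n\ge2).$$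
   Context: For a set $\mathscr Y$ and a finite point set $\mathbf Z$, $\mathsf{CR}_{\mathscr Y}(\mathbf Z)=\sup_{\mathbf y\in\mathscr Y}\min_{\mathbf z\in\mathbf Z}\|\mathbf y-\mathbf z\|$. Separation radius $\mathsf{SR}(\mathbf X_n)=\tfrac12\min_{i\ne j}\|\mathbf x_i-\mathbf x_j\|$; mesh-ratio $\mathsf{MR}_{\mathscr X}(\mathbf X_n)=\mathsf{CR}_{\mathscr X}(\mathbf X_n)/\mathsf{SR}(\mathbf X_n)$. $\mathsf{CR}_n^*$ is the minimum of $\mathsf{CR}_{\mathscr X}$ and $\mathsf{SR}_n^*$ the maximum of $\mathsf{SR}$ over all $n$-point designs of distinct points in $\mathscr X$. *)

From HB Require Import structures.
From mathcomp Require Import all_boot all_order all_algebra.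
From mathcomp Require Import all_classical all_reals all_analysis.
Set Implicit Arguments. Unset Strict Implicit. Unset Printing Implicit Defensive.
Import Order.TTheory GRing.Theory Num.Theory.
Import numFieldNormedType.Exports.
Local Open Scope classical_set_scope.
Local Open Scope ring_scope.

Section Defs.
Variables (R : realType) (d : nat).
Local Notation V := 'rV[R]_d.

Definition is_norm (nrm : V -> R) : Prop :=
  [/\ forall x y, nrm (x + y) <= nrm x + nrm y,
      forall (a : R) x, nrm (a *: x) = `|a| * nrm x &
      forall x, nrm x = 0 -> x = 0].

Definition mindist (nrm : V -> R) (y : V) (Z : set V) : R :=
  inf [set nrm (y - z) | z in Z].

Definition CR (nrm : V -> R) (X Z : set V) : R :=
  sup [set mindist nrm y Z | y in X].

Definition SR (nrm : V -> R) (Z : set V) : R :=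
  inf [set r | exists a b, [/\ Z a, Z b, a <> b & r = nrm (a - b)]] / 2.

Definition MR (nrm : V -> R) (X Z : set V) : R := CR nrm X Z / SR nrm Z.

Definition designs (X : set V) (n : nat) : set (set V) :=
  [set range f | f in [set f : 'I_n -> V | injective f /\ forall i, X (f i)]].

Definition CRstar (nrm : V -> R) (X : set V) (n : nat) : R :=
  inf [set CR nrm X Z | Z in designs X n].

Definition SRstar (nrm : V -> R) (X : set V) (n : nat) : R :=
  sup [set SR nrm Z | Z in designs X n].

Definition firstpts (x : nat -> V) (n : nat) : set V :=
  [set y | exists2 i, (1 <= i <= n)%N & y = x i].

Definition greedy (nrm : V -> R) (XN : seq V) (x : nat -> V) : Prop :=
  x 1%N \in XN /\
  forall k, (1 <= k)%N ->
    x k.+1 \in XN /\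
    forall y, y \in XN ->
      mindist nrm y (firstpts x k) <= mindist nrm (x k.+1) (firstpts x k).

End Defs.

From HB Require Import structures.
From mathcomp Require Import all_boot all_order all_algebra.
From mathcomp Require Import all_classical all_reals all_analysis.
From mathcomp Require Import zify.
Import Order.TTheory GRing.Theory Num.Theory.
Import numFieldNormedType.Exports.
Local Open Scope classical_set_scope.
Local Open Scope ring_scope.

(* Let h_k (gap k below) be the distance from x_{k+1} to X_k.  By the greedy
   choice h_k is nonincreasing and x_1, ..., x_{k+1} are pairwise
   h_k-separated.  Every y in X lies within CR(X_N) of a candidate, which lies
   within h_k of X_k; hence CR(X_k) - CR(X_N) <= h_k, i.e.
   alpha_k CR(X_k) <= h_k.
   Separation is compared with covering by a pigeonhole argument on nearest
   points: if more than |Z| points of X are delta-separated, two of them share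
   a nearest point in Z, so delta <= 2 CR(Z).  This gives h_n <= 2 CR_n^*
   and, applied to an n-point design and Z = X_{n-1}, SR_n^* <= CR(X_{n-1}).
   Together with alpha_n <= alpha_{n-1} these yield the three bounds. *)

Section NormedSpace.
Set Implicit Arguments.
Unset Strict Implicit.

Variables (R : realType) (d : nat) (nrm : 'rV[R]_d -> R).
Hypothesis nrm_norm : is_norm nrm.
Local Notation V := 'rV[R]_d.

Lemma nrmZ a v : nrm (a *: v) = `|a| * nrm v.
Proof. by case: nrm_norm. Qed.

Lemma nrmD u v : nrm (u + v) <= nrm u + nrm v.
Proof. by case: nrm_norm. Qed.

Lemma nrm0 : nrm 0 = 0.
Proof. by rewrite -(scale0r (0 : V)) nrmZ normr0 mul0r. Qed.

Lemma nrmN v : nrm (- v) = nrm v.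
Proof. by rewrite -scaleN1r nrmZ normrN1 mul1r. Qed.

Lemma nrm_ge0 v : 0 <= nrm v.
Proof.
have := nrmD v (- v); rewrite subrr nrm0 nrmN => h.
by rewrite -(@pmulr_rge0 _ 2) // mulr2n mulrDl !mul1r.
Qed.

Lemma nrm_gt0 v : v != 0 -> 0 < nrm v.
Proof.
move=> v0; rewrite lt0r nrm_ge0 andbT; apply/eqP => h.
by case: nrm_norm => _ _ /(_ v h) /eqP; rewrite (negbTE v0).
Qed.

Lemma nrm_distC u v : nrm (u - v) = nrm (v - u).
Proof. by rewrite -opprB nrmN. Qed.

Lemma nrm_distD a b c : nrm (a - c) <= nrm (a - b) + nrm (b - c).
Proof. by rewrite -[a - c](subrKA b); exact: nrmD. Qed.

Lemma nrm_le_mxnorm (u : V) : nrm u <= `|u| * \sum_(j < d) nrm (delta_mx 0 j).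
Proof.
rewrite {1}(row_sum_delta u) mulr_sumr.
apply: (big_ind2 (fun v b => nrm v <= b)) => [|v a w b va wb|j _].
- by rewrite nrm0.
- exact: le_trans (nrmD v w) (lerD va wb).
rewrite nrmZ ler_wpM2r ?nrm_ge0 //.
have -> : `|u| = mx_norm u by [].
rewrite mx_normrE.
exact: (le_bigmax _ (fun ij : 'I_1 * 'I_d => `|u ij.1 ij.2|) (0, j)).
Qed.

Lemma mindist_le_mem y (s : seq V) z :
  z \in s -> mindist nrm y [set` s] <= nrm (y - z).
Proof.
move=> zs; apply: ge_inf; last by exists z.
by exists 0 => _ [w _ <-]; exact: nrm_ge0.
Qed.

Lemma mindist_nearest y (s : seq V) : s != [::] ->
  exists2 z, z \in s & mindist nrm y [set` s] = nrm (y - z).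
Proof.
case: s => [//|w s] _.
pose F (z : seq_sub (w :: s)) := nrm (y - ssval z).
have [z _ zmin] := @arg_minP _ _ _ (SeqSub (mem_head w s)) xpredT F isT.
exists (ssval z); first exact: ssvalP.
apply/le_anti; rewrite mindist_le_mem ?ssvalP //=.
apply: lb_le_inf; first by exists (F z), (ssval z); first exact: ssvalP.
by move=> _ [v vs <-]; exact: (zmin (SeqSub vs)).
Qed.

Lemma mindist_ge0 y (s : seq V) : s != [::] -> 0 <= mindist nrm y [set` s].
Proof. by move=> /(mindist_nearest y) [z _ ->]; exact: nrm_ge0. Qed.

Lemma mindist_subset y (s t : seq V) : s != [::] -> {subset s <= t} ->
  mindist nrm y [set` t] <= mindist nrm y [set` s].
Proof.
by move=> /(mindist_nearest y) [z zs ->] st; exact/mindist_le_mem/st.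
Qed.

Lemma mindist_le_CR (X : set V) (s : seq V) y : compact X -> s != [::] -> X y ->
  mindist nrm y [set` s] <= CR nrm X [set` s].
Proof.
case: s => [//|w s] cX _ Xy; apply: ub_le_sup; last by exists y.
have [M [_ /(_ (M + 1)) HM]] := compact_bounded cX.
set K := \sum_(j < d) nrm (delta_mx 0 j).
have K_ge0 : 0 <= K by apply: sumr_ge0 => j _; exact: nrm_ge0.
exists ((M + 1) * K + nrm w) => _ [z Xz <-].
apply: le_trans (mindist_le_mem z (mem_head w s)) _.
apply: le_trans (nrmD _ _) _; rewrite nrmN lerD2r.
apply: le_trans (nrm_le_mxnorm z) _; apply: ler_wpM2r => //.
by apply: HM => //; rewrite ltrDl.
Qed.

Lemma CR_le (X Z : set V) b : X !=set0 ->
  (forall y, X y -> mindist nrm y Z <= b) -> CR nrm X Z <= b.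
Proof.
move=> [y0 Xy0] le_b; apply: ge_sup; first by exists (mindist nrm y0 Z), y0.
by move=> _ [y Xy <-]; exact: le_b.
Qed.

Lemma CR_subset (X : set V) (s t : seq V) : compact X -> X !=set0 ->
  s != [::] -> {subset s <= t} -> CR nrm X [set` t] <= CR nrm X [set` s].
Proof.
move=> cX X0 s0 st; apply: CR_le => // y Xy.
exact: le_trans (mindist_subset y s0 st) (mindist_le_CR cX s0 Xy).
Qed.

Lemma SR_le_dist (Z : set V) a b : Z a -> Z b -> a <> b ->
  SR nrm Z <= nrm (a - b) / 2.
Proof.
move=> Za Zb ab; rewrite ler_pM2r //; apply: ge_inf; last by exists a, b.
by exists 0 => _ [? [? [_ _ _ ->]]]; exact: nrm_ge0.
Qed.

Lemma SR_ge_sep (Z : set V) delta a b : Z a -> Z b -> a <> b ->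
  (forall u v, Z u -> Z v -> u <> v -> delta <= nrm (u - v)) ->
  delta <= 2 * SR nrm Z.
Proof.
move=> Za Zb ab sep; rewrite /SR mulrC divfK //.
apply: lb_le_inf; first by exists (nrm (a - b)), a, b.
by move=> _ [u [v [Zu Zv uv ->]]]; exact: sep.
Qed.

Lemma nearest_collision (I : eqType) (s : seq I) (p : I -> V) (Z : seq V) :
  uniq s -> Z != [::] -> (size Z < size s)%N ->
  exists i j, [/\ i \in s, j \in s, i != j &
    nrm (p i - p j) <= mindist nrm (p i) [set` Z] + mindist nrm (p j) [set` Z]].
Proof.
move=> s_uniq Z0 Zs.
have /choice [near nearP] : forall i, exists z,
    z \in Z /\ mindist nrm (p i) [set` Z] = nrm (p i - z).
  by move=> i; have [z zZ ->] := mindist_nearest (p i) Z0; exists z.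
have [i [j [si sj ij near_ij]]] :
    exists i j, [/\ i \in s, j \in s, i != j & near i = near j].
  apply: contrapT => no_collision.
  have near_inj : {in s &, injective near}.
    move=> i j si sj near_ij; apply: contrapT => /eqP ij.
    by apply: no_collision; exists i, j.
  have near_sub : {subset map near s <= Z}.
    by move=> _ /mapP [i _ ->]; case: (nearP i).
  have near_uniq : uniq (map near s) by rewrite map_inj_in_uniq.
  by have := uniq_leq_size near_uniq near_sub; rewrite size_map leqNgt Zs.
exists i, j; split => //.
case: (nearP i) => _ ->; case: (nearP j) => _ ->.
by rewrite [nrm (p j - _)]nrm_distC -near_ij; exact: nrm_distD.
Qed.

Lemma range_enum n (f : 'I_n -> V) : range f = [set` map f (enum 'I_n)].
Proof.
apply/seteqP; split => y /=; first by move=> [i _ <-]; rewrite map_f ?mem_enum.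
by move=> /mapP [i _ ->]; exists i.
Qed.

Lemma designs_nonempty (X : set V) (s : seq V) n : uniq s ->
  (forall z, z \in s -> X z) -> (n <= size s)%N -> designs X n !=set0.
Proof.
move=> s_uniq sX ns; pose f (i : 'I_n) := nth 0 s i.
have lt_s (i : 'I_n) : (i < size s)%N by apply: leq_trans ns.
exists (range f), f => //; split => [i j /eqP|i].
  by rewrite nth_uniq // => /eqP /val_inj.
exact/sX/mem_nth.
Qed.

Lemma CRstar_packing (X : set V) n (I : eqType) (s : seq I) (p : I -> V) delta :
  compact X -> designs X n !=set0 -> (0 < n)%N -> uniq s -> (n < size s)%N ->
  (forall i, i \in s -> X (p i)) ->
  (forall i j, i \in s -> j \in s -> i != j -> delta <= nrm (p i - p j)) ->
  delta <= 2 * CRstar nrm X n.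
Proof.
move=> cX [D0 DD0] n_gt0 s_uniq ns sX sep.
rewrite mulrC -ler_pdivrMr //.
apply: lb_le_inf => [|_ [_ [f _ <-] <-]]; first by exists (CR nrm X D0), D0.
rewrite range_enum ler_pdivrMr // mulr_natr mulr2n.
have Z0 : map f (enum 'I_n) != [::].
  by rewrite -size_eq0 size_map size_enum_ord -lt0n.
have [|i [j [si sj ij near_ij]]] := nearest_collision p s_uniq Z0.
  by rewrite size_map size_enum_ord.
apply: le_trans (sep _ _ si sj ij) (le_trans near_ij _).
by apply: lerD; apply: mindist_le_CR => //; exact: sX.
Qed.

Lemma SRstar_le_CR (X : set V) n (s : seq V) :
  compact X -> designs X n !=set0 -> s != [::] -> (size s < n)%N ->
  SRstar nrm X n <= CR nrm X [set` s].
Proof.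
move=> cX [D0 DD0] s0 sn.
apply: ge_sup => [|_ [_ [f [f_inj fX] <-] <-]]; first by exists (SR nrm D0), D0.
have [|i [j [_ _ ij near_ij]]] := nearest_collision f (enum_uniq 'I_n) s0.
  by rewrite size_enum_ord.
have fij : f i <> f j by move/f_inj/eqP; rewrite (negbTE ij).
apply: le_trans (SR_le_dist (imageP _ I) (imageP _ I) fij) _.
rewrite ler_pdivrMr // mulr_natr mulr2n; apply: le_trans near_ij _.
by apply: lerD; apply: mindist_le_CR.
Qed.

Section Greedy.
Variables (X : set V) (XN : seq V) (x : nat -> V).

Definition pts k := map x (iota 1 k).

Definition gap k := mindist nrm (x k.+1) [set` pts k].

Definition alpha k := 1 - CR nrm X [set` XN] / CR nrm X [set` pts k].

Lemma mem_pts k i : (1 <= i <= k)%N -> x i \in pts k.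
Proof. by move=> ik; rewrite map_f // mem_iota; lia. Qed.

Lemma ptsP k y : reflect (exists2 i, (1 <= i <= k)%N & y = x i) (y \in pts k).
Proof.
apply: (iffP mapP) => -[i ik ->]; exists i => //.
  by move: ik; rewrite mem_iota; lia.
by rewrite mem_iota; lia.
Qed.

Lemma firstptsE k : firstpts x k = [set` pts k].
Proof. by apply/seteqP; split => y /ptsP. Qed.

Lemma pts_neq_nil k : (0 < k)%N -> pts k != [::].
Proof. by case: k. Qed.

Lemma pts_subset k m : (k <= m)%N -> {subset pts k <= pts m}.
Proof. by move=> km _ /ptsP [i ik ->]; apply: mem_pts; lia. Qed.

Hypothesis x_greedy : greedy nrm XN x.

Lemma greedy_mem k : (0 < k)%N -> x k \in XN.
Proof.
case: k => [//|[|k]] _; first by case: x_greedy.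
by case: x_greedy => _ /(_ k.+1 isT) [].
Qed.

Lemma XN_neq_nil : XN != [::].
Proof. by have := greedy_mem (k := 1) isT; case: XN. Qed.

Lemma gap_max k y : (0 < k)%N -> y \in XN ->
  mindist nrm y [set` pts k] <= gap k.
Proof.
move=> k_gt0; rewrite /gap -firstptsE.
by case: x_greedy => _ /(_ k k_gt0) [_]; exact.
Qed.

Lemma gap_nonincreasing k m : (0 < k)%N -> (k <= m)%N -> gap m <= gap k.
Proof.
move=> k_gt0; elim: m => [|m IH] km; first by lia.
have [->|km'] := eqVneq k m.+1; first exact: lexx.
apply: le_trans (IH _); last by lia.
have m_gt0 : (0 < m)%N by lia.
have sub_m := pts_subset (leqnSn m).
apply: le_trans (mindist_subset _ (pts_neq_nil m_gt0) sub_m) _.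
apply: gap_max; [lia | apply: greedy_mem; lia].
Qed.

Lemma gap_sep m i j : (0 < m)%N -> (1 <= i <= m.+1)%N -> (1 <= j <= m.+1)%N ->
  i != j -> gap m <= nrm (x i - x j).
Proof.
wlog lt_ij : i j / (i < j)%N.
  move=> wlog_ij m_gt0 im jm ij; have [lt_ij|lt_ji|eq_ij] := ltngtP i j.
  - exact: wlog_ij.
  - by rewrite nrm_distC; apply: wlog_ij; rewrite // eq_sym.
  - by rewrite eq_ij eqxx in ij.
case: j lt_ij => [//|j] lt_ij m_gt0 im jm _; rewrite nrm_distC.
apply: le_trans (gap_nonincreasing _ _) (mindist_le_mem _ (mem_pts _)); lia.
Qed.

Hypotheses (X_compact : compact X) (XN_X : forall z, z \in XN -> X z).

Lemma greedy_X k : (0 < k)%N -> X (x k).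
Proof. by move=> k_gt0; exact/XN_X/greedy_mem. Qed.

Lemma X_nonempty : X !=set0.
Proof. by exists (x 1); exact: greedy_X. Qed.

Lemma CR_XN_ge0 : 0 <= CR nrm X [set` XN].
Proof.
apply: le_trans (mindist_ge0 (x 1) XN_neq_nil) _.
exact: mindist_le_CR X_compact XN_neq_nil (greedy_X _).
Qed.

Lemma CR_pts_le k : (0 < k)%N ->
  CR nrm X [set` pts k] <= CR nrm X [set` XN] + gap k.
Proof.
move=> k_gt0; apply: CR_le X_nonempty _ => y Xy.
have [z zXN yz] := mindist_nearest y XN_neq_nil.
have [w wk zw] := mindist_nearest z (pts_neq_nil k_gt0).
apply: le_trans (mindist_le_mem y wk) (le_trans (nrm_distD y z w) (lerD _ _)).
  by rewrite -yz; exact: mindist_le_CR XN_neq_nil Xy.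
by rewrite -zw; exact: gap_max.
Qed.

Hypothesis XN_uniq : uniq XN.

Lemma gap_gt0 k : (0 < k)%N -> (k < size XN)%N -> 0 < gap k.
Proof.
move=> k_gt0 k_lt.
have [z zXN zk] : exists2 z, z \in XN & z \notin pts k.
  apply: contrapT => all_selected.
  have XN_sub : {subset XN <= pts k}.
    by move=> z zXN; apply: contrapT => /negP zk; apply: all_selected; exists z.
  have := uniq_leq_size XN_uniq XN_sub.
  by rewrite size_map size_iota leqNgt k_lt.
apply: lt_le_trans (gap_max k_gt0 zXN).
have [w wk ->] := mindist_nearest z (pts_neq_nil k_gt0).
by apply: nrm_gt0; rewrite subr_eq0; apply: contraNneq zk => ->.
Qed.

Lemma CR_pts_gt0 k : (0 < k)%N -> (k < size XN)%N -> 0 < CR nrm X [set` pts k].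
Proof.
move=> k_gt0 k_lt; apply: lt_le_trans (gap_gt0 k_gt0 k_lt) _.
exact: mindist_le_CR (pts_neq_nil k_gt0) (greedy_X _).
Qed.

Lemma alpha_CR_le_gap k : (0 < k)%N -> (k < size XN)%N ->
  alpha k * CR nrm X [set` pts k] <= gap k.
Proof.
move=> k_gt0 k_lt; have c_gt0 := CR_pts_gt0 k_gt0 k_lt.
rewrite /alpha mulrBl mul1r mulfVK ?gt_eqF // lerBlDl.
exact: CR_pts_le.
Qed.

Lemma alpha_nonincreasing k m : (0 < k)%N -> (k <= m)%N -> (m < size XN)%N ->
  alpha m <= alpha k.
Proof.
move=> k_gt0 km m_lt.
have cm_gt0 := CR_pts_gt0 (leq_trans k_gt0 km) m_lt.
have ck_gt0 := CR_pts_gt0 k_gt0 (leq_ltn_trans km m_lt).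
rewrite lerD2l lerN2 ler_wpM2l ?CR_XN_ge0 // lef_pV2 ?posrE //.
exact: CR_subset X_compact X_nonempty (pts_neq_nil _) (pts_subset km).
Qed.

Lemma gap_le_SR n : (1 < n)%N -> (n < size XN)%N ->
  gap n.-1 <= 2 * SR nrm [set` pts n].
Proof.
move=> n_gt1 n_lt; have m_gt0 : (0 < n.-1)%N by lia.
have sep u v : u \in pts n -> v \in pts n -> u <> v -> gap n.-1 <= nrm (u - v).
  move=> /ptsP [i ni ->] /ptsP [j nj ->] xij.
  apply: gap_sep; rewrite ?prednK //; [lia | lia |].
  by apply: contraPneq xij => ->.
have x12 : x 1 <> x 2.
  have gap12 : gap n.-1 <= nrm (x 1 - x 2) by apply: gap_sep => //; lia.
  move=> x12; move: gap12; rewrite x12 subrr nrm0 leNgt gap_gt0 //; lia.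
by apply: (SR_ge_sep (mem_pts _) (mem_pts _) x12) => //; lia.
Qed.

Lemma alpha_CR_le_CRstar n : (0 < n)%N -> (n < size XN)%N ->
  alpha n * CR nrm X [set` pts n] <= 2 * CRstar nrm X n.
Proof.
move=> n_gt0 n_lt; apply: le_trans (alpha_CR_le_gap n_gt0 n_lt) _.
have designs_n := designs_nonempty XN_uniq XN_X (ltnW n_lt).
apply: (CRstar_packing (p := x) X_compact designs_n n_gt0 (iota_uniq 1 n.+1)).
- by rewrite size_iota.
- by move=> i; rewrite mem_iota => /andP [i_gt0 _]; exact: greedy_X.
- by move=> i j; rewrite !mem_iota => ni nj ij; apply: gap_sep => //; lia.
Qed.

Lemma alpha_SRstar_le_SR n : (1 < n)%N -> (n < size XN)%N -> 0 <= alpha n ->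
  alpha n * SRstar nrm X n <= 2 * SR nrm [set` pts n].
Proof.
move=> n_gt1 n_lt alpha_ge0; have m_gt0 : (0 < n.-1)%N by lia.
have m_lt : (n.-1 < size XN)%N by lia.
have designs_n := designs_nonempty XN_uniq XN_X (ltnW n_lt).
have SRstar_le : SRstar nrm X n <= CR nrm X [set` pts n.-1].
  apply: SRstar_le_CR X_compact designs_n (pts_neq_nil m_gt0) _.
  by rewrite size_map size_iota; lia.
have alpha_le : alpha n <= alpha n.-1 by apply: alpha_nonincreasing => //; lia.
apply: le_trans (gap_le_SR n_gt1 n_lt).
apply: le_trans (alpha_CR_le_gap m_gt0 m_lt).
apply: le_trans (ler_wpM2l alpha_ge0 SRstar_le) (ler_wpM2r _ alpha_le).
exact: ltW (CR_pts_gt0 m_gt0 m_lt).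
Qed.

Lemma alpha_CR_le_SR n : (1 < n)%N -> (n < size XN)%N ->
  alpha n * CR nrm X [set` pts n] <= 2 * SR nrm [set` pts n].
Proof.
move=> n_gt1 n_lt; apply: le_trans (alpha_CR_le_gap _ n_lt) _; first by lia.
by apply: le_trans (gap_le_SR n_gt1 n_lt); apply: gap_nonincreasing; lia.
Qed.

End Greedy.
End NormedSpace.

Theorem theorem6 (R : realType) (d : nat) (nrm : 'rV[R]_d -> R)
    (X : set 'rV[R]_d) (XN : seq 'rV[R]_d) (N : nat)
    (x : nat -> 'rV[R]_d) (n : nat) :
  is_norm nrm ->
  compact X ->
  uniq XN -> size XN = N -> (forall z, z \in XN -> X z) ->
  greedy nrm XN x ->
  (n < N)%N ->
  let Xn := firstpts x n in
  let alpha := 1 - CR nrm X [set` XN] / CR nrm X Xn in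
  0 < alpha ->
  [/\ (1 <= n)%N -> CR nrm X Xn <= (2 / alpha) * CRstar nrm X n,
      (2 <= n)%N -> (alpha / 2) * SRstar nrm X n <= SR nrm Xn &
      (2 <= n)%N -> MR nrm X Xn <= 2 / alpha].
Proof.
move=> nrm_norm X_compact XN_uniq <- XN_X x_greedy n_lt; cbv zeta.
rewrite firstptsE -/(alpha nrm X XN x n) => alpha_gt0.
split => [n_gt0|n_gt1|n_gt1].
- rewrite mulrAC ler_pdivlMr // mulrC.
  exact: alpha_CR_le_CRstar.
- rewrite mulrAC ler_pdivrMr // [_ * 2]mulrC.
  exact: alpha_SRstar_le_SR (ltW alpha_gt0).
- have CR_le :=
    alpha_CR_le_SR nrm_norm x_greedy X_compact XN_X XN_uniq n_gt1 n_lt.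
  have SR_gt0 : 0 < SR nrm [set` pts x n].
    rewrite -(pmulr_rgt0 _ (ltr0Sn _ 1)); apply: lt_le_trans CR_le.
    exact: mulr_gt0 alpha_gt0
      (CR_pts_gt0 nrm_norm x_greedy X_compact XN_X XN_uniq (ltnW n_gt1) n_lt).
  by rewrite /MR ler_pdivrMr // mulrAC ler_pdivlMr // mulrC.
Qed.
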